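(* Let $\mathcal{F}_A$ and $\mathcal{F}_B$ be scaling functions associated with the sets $A = \{p : \mathcal{F}_A(p,\theta) \le 1\}$ and $B = \{p : \mathcal{F}_B(p,\theta) \le 1\}$, respectively, and fix $\theta$. Consider the problem $\min_{p \in \mathbb{R}^{n_p}} \mathcal{F}_A(p,\theta)$ s.t. $\mathcal{F}_B(p,\theta) \le 1$, with Lagrangian $L(p,\theta,\lambda) = \mathcal{F}_A(p,\theta) + \lambda(\mathcal{F}_B(p,\theta) - 1)$. If $A \cap B = \varnothing$, then any pair of an optimal primal variable $p^\star$ and an optimal dual variable $\lambda^\star$ of this problem satisfies $\mathcal{F}_A(p^\star,\theta) > 1$, $\lambda^\star > 0$, $\frac{\partial \mathcal{F}_B}{\partial p}(p^\star,\theta) \ne 0$, and $\mathcal{F}_B(p^\star,\theta) = 1$.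
   Context: A scaling function (with parameters $\theta \in \mathbb{R}^{n_\theta}$) for a closed set $A \subset \mathbb{R}^{n_p}$ with non-empty interior is a $\mathcal{C}^2$ function $\mathcal{F}_A : \mathbb{R}^{n_p} \times \mathbb{R}^{n_\theta} \to \mathbb{R}$ such that, for each $\theta$, $\mathcal{F}_A(\cdot,\theta)$ is convex, $A = \{p \in \mathbb{R}^{n_p} : \mathcal{F}_A(p,\theta) \le 1\}$, and there exists $p \in A$ with $\mathcal{F}_A(p,\theta) < 1$. An optimal primal variable is a minimizer $p^\star$; an optimal dual variable is a $\lambda^\star \ge 0$ maximizing the dual function $\lambda \mapsto \inf_p L(p,\theta,\lambda)$ over $\lambda \ge 0$. *)

From HB Require Import structures.
From mathcomp Require Import all_boot all_order all_algebra.
From mathcomp Require Import all_classical all_reals all_analysis.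
Set Implicit Arguments. Unset Strict Implicit. Unset Printing Implicit Defensive.
Import Order.TTheory GRing.Theory Num.Theory.
Import numFieldNormedType.Exports.
Local Open Scope classical_set_scope.
Local Open Scope ring_scope.

Section Defs.
Variables (R : realType) (np nth : nat).
Notation V := ('rV[R]_np * 'rV[R]_nth)%type.

(* C^2: differentiable everywhere, every directional derivative is
   differentiable everywhere, and all second directional derivatives
   are continuous (in finite dimension this is exactly C^2). *)
Definition C2 (F : V -> R) : Prop :=
  (forall x : V, differentiable F x) /\
  (forall (v : V) (x : V), differentiable (fun y : V => 'D_v F y) x) /\
  (forall (u v : V), continuous (fun y : V => 'D_u (fun z : V => 'D_v F z) y)).

Definition convex_in_p (F : V -> R) : Prop :=
  forall (th : 'rV[R]_nth) (x y : 'rV[R]_np) (t : R), 0 <= t <= 1 ->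
    F (t *: x + (1 - t) *: y, th) <= t * F (x, th) + (1 - t) * F (y, th).

Definition scaling_function (A : set 'rV[R]_np) (F : V -> R) : Prop :=
  closed A /\ interior A !=set0 /\ C2 F /\ convex_in_p F /\
  (forall th, A = [set p | F (p, th) <= 1]) /\
  (forall th, exists2 p, A p & F (p, th) < 1).

Definition lagrangian (FA FB : V -> R) (p : 'rV[R]_np) (th : 'rV[R]_nth) (l : R) : R :=
  FA (p, th) + l * (FB (p, th) - 1).

(* dual function, valued in extended reals (may be -oo) *)
Definition dual_fun (FA FB : V -> R) (th : 'rV[R]_nth) (l : R) : \bar R :=
  ereal_inf [set (lagrangian FA FB p th l)%:E | p in [set: 'rV[R]_np]].

Definition optimal_primal (FA FB : V -> R) (th : 'rV[R]_nth) (ps : 'rV[R]_np) : Prop :=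
  FB (ps, th) <= 1 /\ forall p, FB (p, th) <= 1 -> FA (ps, th) <= FA (p, th).

Definition optimal_dual (FA FB : V -> R) (th : 'rV[R]_nth) (ls : R) : Prop :=
  0 <= ls /\ forall l, 0 <= l -> (dual_fun FA FB th l <= dual_fun FA FB th ls)%E.

Definition grad_p (F : V -> R) (p : 'rV[R]_np) (th : 'rV[R]_nth) : 'rV[R]_np :=
  \row_i 'D_((delta_mx 0 i : 'rV[R]_np), (0 : 'rV[R]_nth)) F (p, th).

End Defs.

From HB Require Import structures.
From mathcomp Require Import all_boot all_order all_algebra.
From mathcomp Require Import all_classical all_reals all_analysis.
From mathcomp Require Import ring lra.
Import Order.TTheory GRing.Theory Num.Theory.
Import numFieldNormedType.Exports.
Local Open Scope classical_set_scope.
Local Open Scope ring_scope.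

(* At an optimal point ps, feasibility puts ps in B, hence outside A, so
   FA ps > 1.  If the constraint were slack, a small step towards a point of A
   would lower FA while staying feasible; hence FB ps = 1, and a point q with
   FB q < 1 makes the convex FB strictly decrease along q - ps, so its
   p-gradient is nonzero.  Optimality forbids common descent directions of FA
   and FB, which for a single constraint yields a KKT multiplier lam >= 0 (a
   one-line Farkas lemma).  By convexity ps then minimises the Lagrangian at
   lam, so the dual function at lam is at least FA ps > 1, while at 0 it is at
   most inf FA < 1: the dual optimum cannot be 0. *)

Section DirectionalDerivative.
Context {R : realType} {V : normedModType R}.
Implicit Types (F : V -> R) (x v : V).

Lemma derive_cvg_at_right {F x} v : differentiable F x ->
  t^-1 * (F (t *: v + x) - F x) @[t --> 0^'+] --> 'D_v F x.
Proof. by move=> dF; apply: cvg_dnbhs_at_right; exact: diff_derivable. Qed.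

Lemma derive_le_sub_of_convex {F x} v : differentiable F x ->
  (forall t, 0 < t < 1 -> F (t *: v + x) <= t * F (v + x) + (1 - t) * F x) ->
  'D_v F x <= F (v + x) - F x.
Proof.
move=> dF cvx; apply: (ler_cvg_to (derive_cvg_at_right v dF) (cvg_cst _)).
near=> t.
have t0 : 0 < t by near: t; exact: near_withinT.
have t1 : t < 1 by near: t; exact: nbhs_right_lt.
rewrite ler_pdivrMl //; have := cvx t; rewrite t0 t1 => /(_ isT); lra.
Unshelve. all: by end_near. Qed.

Lemma derive_lt0_descent {F x} v : differentiable F x -> 'D_v F x < 0 ->
  \forall t \near 0^'+, F (t *: v + x) < F x.
Proof.
move=> dF Dv0; near=> t.
have t0 : 0 < t by near: t; exact: near_withinT.
have : t^-1 * (F (t *: v + x) - F x) < 0.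
  by near: t; exact: cvgr_lt (derive_cvg_at_right v dF) _ Dv0.
by rewrite pmulr_rlt0 ?invr_gt0 // subr_lt0.
Unshelve. all: by end_near. Qed.

End DirectionalDerivative.

Lemma exists_step_le {R : realFieldType} (b c : R) : b < 1 ->
  exists2 t, 0 < t <= 1 & b + t * c <= 1.
Proof.
move=> b_lt1; have den_gt0 : 0 < 1 - b + `|c| by rewrite ltr_wpDr // subr_gt0.
pose t := (1 - b) / (1 - b + `|c|).
have tE : t * (1 - b + `|c|) = 1 - b by rewrite mulfVK ?gt_eqF.
have t_gt0 : 0 < t by rewrite divr_gt0 // subr_gt0.
exists t; first by rewrite t_gt0 /= ler_pdivrMr // mul1r lerDl.
have : t * c <= t * `|c| by apply: ler_wpM2l; [exact: ltW | exact: ler_norm].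
have : 0 <= t * (1 - b) by rewrite mulr_ge0 ?ltW ?subr_gt0.
lra.
Qed.

Section LinearFunctionals.
Context {R : realFieldType} {U : lmodType R}.

Lemma affine_ge0_slope_eq0 (a b : R) : (forall k, 0 <= k * a + b) -> a = 0.
Proof.
move=> ge0; have [//|a_neq0] := eqVneq a 0.
have := ge0 (- (b + 1) / a); rewrite mulfVK //; lra.
Qed.

Lemma linear_multiplier {f g : U -> R} {e : U} :
  linear_for *%R f -> linear_for *%R g -> g e < 0 ->
  (forall d, g d < 0 -> 0 <= f d) ->
  exists2 lam, 0 <= lam & forall d, f d + lam * g d = 0.
Proof.
move=> lin_f lin_g ge_neg descent.
have fD : {morph f : u v / u - v} := zmod_morphism_linear lin_f.
have fZ : forall a u, f (a *: u) = a * f u := scalable_linear lin_f.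
have gD : {morph g : u v / u - v} := zmod_morphism_linear lin_g.
have gZ : forall a u, g (a *: u) = a * g u := scalable_linear lin_g.
have ge_neq0 : g e != 0 by rewrite lt_eqF.
exists (f e / - g e); first by rewrite divr_ge0 ?descent // oppr_ge0 ltW.
move=> d; pose d' := d - (g d / g e) *: e.
have gd' : g d' = 0 by rewrite /d' gD gZ /= mulfVK // subrr.
(* each [k *: d' + e] is a descent direction of [g] *)
have fd' : f d' = 0.
  apply: (affine_ge0_slope_eq0 _ (f e)) => k.
  by rewrite -lin_f descent // lin_g gd' mulr0 add0r.
move: fd'; rewrite /d' fD fZ /= => fd'.
by rewrite -fd'; field.
Qed.

Lemma linear_row_sum_delta {n} {f : 'rV[R]_n -> R} :
  linear_for *%R f -> forall d, f d = \sum_j d 0 j * f (delta_mx 0 j).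
Proof.
move=> lin_f d.
have fZ : forall a u, f (a *: u) = a * f u := scalable_linear lin_f.
have fD : {morph f : u v / u + v}.
  by move=> u v; have := lin_f 1 u v; rewrite scale1r mul1r.
have f0 : f 0 = 0 by rewrite -(scale0r 0) fZ mul0r.
rewrite {1}(row_sum_delta d) (big_morph f fD f0).
by apply: eq_bigr => j _; rewrite fZ.
Qed.

End LinearFunctionals.

Section PartialDerivative.
Context {R : realType} {np nth : nat}.
Local Notation V := ('rV[R]_np * 'rV[R]_nth)%type.
Implicit Types (F : V -> R) (p q d : 'rV[R]_np) (th : 'rV[R]_nth).

Definition pderive F (x : V) d : R := 'D_((d, 0) : V) F x.

Lemma scale_pair_addr t d p th : t *: ((d, 0) : V) + (p, th) = (t *: d + p, th).
Proof. by congr (_, _) => /=; rewrite scaler0 add0r. Qed.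

Lemma pderive_linear {F x} : differentiable F x -> linear_for *%R (pderive F x).
Proof.
move=> dF a u v; rewrite /pderive !deriveE //.
have -> : ((a *: u + v, 0) : V) = a *: (u, 0) + (v, 0).
  by congr (_, _); rewrite /= scaler0 addr0.
by rewrite linearP.
Qed.

Lemma grad_p_eq0_pderive {F p th} : differentiable F (p, th) ->
  grad_p F p th = 0 -> forall d, pderive F (p, th) d = 0.
Proof.
move=> dF grad0 d; rewrite (linear_row_sum_delta (pderive_linear dF) d) big1 // => j _.
have := congr1 (fun M : 'rV[R]_np => M 0 j) grad0.
by rewrite !mxE /pderive => ->; rewrite mulr0.
Qed.

Lemma convex_in_p_le {F p th} q : convex_in_p F -> differentiable F (p, th) ->
  pderive F (p, th) (q - p) <= F (q, th) - F (p, th).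
Proof.
move=> cvx dF; have qE : ((q - p, 0) : V) + (p, th) = (q, th).
  by rewrite -[(q - p, 0)]scale1r scale_pair_addr scale1r subrK.
have := derive_le_sub_of_convex (q - p, 0) dF; rewrite qE.
apply => t /andP[t0 t1]; rewrite scale_pair_addr.
have -> : t *: (q - p) + p = t *: q + (1 - t) *: p.
  by rewrite scalerBr scalerBl scale1r addrA addrAC.
by rewrite cvx // !ltW.
Qed.

End PartialDerivative.

Section DualFunction.
Context {R : realType} {np nth : nat}.
Context {FA FB : 'rV[R]_np * 'rV[R]_nth -> R} {th : 'rV[R]_nth}.

Lemma dual_fun_le_lagrangian l p :
  (dual_fun FA FB th l <= (lagrangian FA FB p th l)%:E)%E.
Proof. by apply: ereal_inf_lbound; exists p. Qed.

Lemma dual_fun_ge {l a} : (forall p, a <= lagrangian FA FB p th l) ->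
  (a%:E <= dual_fun FA FB th l)%E.
Proof. by move=> ge_a; apply: le_ereal_inf_tmp => _ [p _ <-]; rewrite lee_fin. Qed.

Lemma optimal_dual_neq0 {ls lam a} p0 : optimal_dual FA FB th ls -> 0 <= lam ->
  (forall p, a <= lagrangian FA FB p th lam) -> FA (p0, th) < a -> ls != 0.
Proof.
move=> [_ ls_opt] lam_ge0 /dual_fun_ge dual_lam FAp_lt; apply/eqP => ls0.
have := dual_fun_le_lagrangian 0 p0; rewrite /lagrangian mul0r addr0 -ls0.
move=> /(le_trans (le_trans dual_lam (ls_opt _ lam_ge0))); rewrite lee_fin.
by rewrite leNgt FAp_lt.
Qed.

End DualFunction.

Section OptimalPrimal.
Context {R : realType} {np nth : nat}.
Local Notation V := ('rV[R]_np * 'rV[R]_nth)%type.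
Context {FA FB : V -> R} {th : 'rV[R]_nth} {ps : 'rV[R]_np}.
Hypotheses (cvxA : convex_in_p FA) (cvxB : convex_in_p FB).
Hypotheses (dFA : differentiable FA (ps, th)) (dFB : differentiable FB (ps, th)).
Hypothesis ps_opt : optimal_primal FA FB th ps.

Lemma optimal_primal_active {p} : FA (p, th) < FA (ps, th) -> FB (ps, th) = 1.
Proof.
have [FBps psopt] := ps_opt; move=> FAp_lt; apply/eqP; rewrite eq_le FBps leNgt /=.
apply/negP => /(exists_step_le _ (FB (p, th) - FB (ps, th)))[t /andP[t0 t1] step].
have t01 : 0 <= t <= 1 by rewrite ltW.
have := cvxA th p ps t t01; have := cvxB th p ps t t01.
set z := t *: p + (1 - t) *: ps => FBz FAz.
have /psopt : FB (z, th) <= 1 by apply: le_trans FBz _; lra.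
have : t * FA (p, th) < t * FA (ps, th) by rewrite ltr_pM2l.
lra.
Qed.

Lemma optimal_primal_pderive_ge0 d :
  pderive FB (ps, th) d < 0 -> 0 <= pderive FA (ps, th) d.
Proof.
have [FBps psopt] := ps_opt; move=> FB_desc; rewrite leNgt; apply/negP => FA_desc.
have [t [/=]] := filter_ex (filterI (derive_lt0_descent _ dFA FA_desc)
                                    (derive_lt0_descent _ dFB FB_desc)).
rewrite !scale_pair_addr => FA_lt FB_lt.
by have := psopt _ (ltW (lt_le_trans FB_lt FBps)); rewrite leNgt FA_lt.
Qed.

Lemma stationary_lagrangian_ge {lam} : FB (ps, th) = 1 -> 0 <= lam ->
  (forall d, pderive FA (ps, th) d + lam * pderive FB (ps, th) d = 0) ->
  forall p, FA (ps, th) <= lagrangian FA FB p th lam.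
Proof.
move=> FBps lam_ge0 stat p; rewrite /lagrangian.
have := convex_in_p_le p cvxA dFA; have := convex_in_p_le p cvxB dFB.
rewrite FBps => /(ler_wpM2l lam_ge0); have := stat (p - ps); lra.
Qed.

End OptimalPrimal.

Theorem lemma2 (R : realType) (np nth : nat)
  (A B : set 'rV[R]_np) (FA FB : 'rV[R]_np * 'rV[R]_nth -> R)
  (th : 'rV[R]_nth) (ps : 'rV[R]_np) (ls : R) :
  scaling_function A FA -> scaling_function B FB ->
  A `&` B = set0 ->
  optimal_primal FA FB th ps -> optimal_dual FA FB th ls ->
  [/\ 1 < FA (ps, th), 0 < ls, grad_p FB ps th != 0 & FB (ps, th) = 1].
Proof.
move=> [_ [_ [[dFA _] [cvxA [eqA exA]]]]] [_ [_ [[dFB _] [cvxB [eqB exB]]]]] AB.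
move=> ps_opt ls_opt; have [p0 _ FAp0] := exA th; have [q _ FBq] := exB th.
have FAps : 1 < FA (ps, th).
  rewrite ltNge; apply/negP => FAps_le1.
  suff : (A `&` B) ps by rewrite AB.
  by rewrite (eqA th) (eqB th); split=> //; case: ps_opt.
have FBps := optimal_primal_active cvxA cvxB ps_opt (lt_trans FAp0 FAps).
have slater : pderive FB (ps, th) (q - ps) < 0.
  by apply: le_lt_trans (convex_in_p_le q cvxB (dFB _)) _; rewrite FBps subr_lt0.
have [lam lam_ge0 stat] := linear_multiplier (pderive_linear (dFA _))
  (pderive_linear (dFB _)) slater (optimal_primal_pderive_ge0 (dFA _) (dFB _) ps_opt).
have L_ge := stationary_lagrangian_ge cvxA cvxB (dFA _) (dFB _) FBps lam_ge0 stat.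
split => //.
- rewrite lt_def (optimal_dual_neq0 p0 ls_opt lam_ge0 L_ge (lt_trans FAp0 FAps)).
  by case: ls_opt.
- by apply: contraTneq slater => /(grad_p_eq0_pderive (dFB _)) ->; rewrite ltxx.
Qed.
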